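(* Let $(\Delta,R)$ be a gentle quiver, $R_0$ a set of isolated relations in it, and $(\Delta',R')$ the quiver obtained from $(\Delta,R)$ by completing the relations from $R_0$. If $(\Delta',R')$ is a gentle quiver, then \[ f_{(\Delta',R')} = |R_0|\cdot[0,3] + \sum_{\mathcal O\in\mathcal N/\mathbb Z\,\cup\,\mathcal C/\mathbb Z}[\,p(\mathcal O)-m(\mathcal O),\; q(\mathcal O)-2m(\mathcal O)\,], \] where the orbits are those of $(\Delta,R)$ and $m(\mathcal O):=|R_0\cap\mathcal O|$.
   Context: A quiver $\Delta$ has finite vertex set $\Delta_0$, arrow set $\Delta_1$, maps $s,t$. A path of length $n\ge1$ is $(\alpha_1,\dots,\alpha_n)$ with $s\alpha_i=t\alpha_{i+1}$. A gentle quiver is $(\Delta,R)$ with $\Delta$ connected, $R$ a set of paths of length 2, such that: (1) each vertex is start of at most two arrows and end of at most two arrows; (2) for each arrow $\alpha$ at most one $\beta$ with $s\beta=t\alpha$, $(\beta,\alpha)\notin R$ and at most one $\gamma$ with $t\gamma=s\alpha$, $(\alpha,\gamma)\notin R$; (3) for each $\alpha$ at most one $\beta$ with $(\beta,\alpha)\in R$ and at most one $\gamma$ with $(\alpha,\gamma)\in R$; (4) for some $n$ every path of length $n$ has a subpath in $R$. Fix $\sigma,\tau:\Delta_1\to\{\pm1\}$ with distinct arrows of same start having opposite $\sigma$, distinct arrows of same end opposite $\tau$, and for $s\alpha=t\beta$: $(\alpha,\beta)\in R$ iff $\sigma\alpha=\tau\beta$; $\sigma\omega=\sigma\alpha_n,\tau\omega=\tau\alpha_1$.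 Permitted paths: no consecutive pair in $R$, plus trivial $1_{x,\varepsilon}$ ($s=t=x$, $\sigma=\varepsilon,\tau=-\varepsilon$); maximal if no arrow $\alpha$ with $s\alpha=t\omega,\sigma\alpha=-\tau\omega$ and no $\beta$ with $t\beta=s\omega,\tau\beta=-\sigma\omega$; set $\mathcal M$. Antipaths: all consecutive pairs in $R$, plus trivial $1'_{x,\varepsilon}$ ($\sigma=\tau=\varepsilon$); maximal if no $\alpha$ with $s\alpha=t\omega,\sigma\alpha=\tau\omega$ and no $\beta$ with $t\beta=s\omega,\tau\beta=\sigma\omega$; set $\mathcal N$. $\phi:\mathcal M\to\mathcal N$, $\omega\mapsto$ unique $\omega'$ with $t\omega'=t\omega,\tau\omega'=-\tau\omega$; $\psi:\mathcal N\to\mathcal M$, $\omega\mapsto$ unique $\omega'$ with $s\omega'=s\omega,\sigma\omega'=-\sigma\omega$; $\Phi=\phi\psi$; orbits $\mathcal N/\mathbb Z$ with $p(\mathcal O)=|\mathcal O|$, $q(\mathcal O)=\sum_{\omega\in\mathcal O}\ell(\omega)$. $\mathcal C$: arrows $\alpha$ with $(\alpha)$ not a subpath of a maximal antipath; $\Psi:\mathcal C\to\mathcal C$, $\alpha\mapsto$ unique $\beta\in\mathcal C$ with $t\beta=s\alpha,\tau\beta=\sigma\alpha$; orbits $\mathcal C/\mathbb Z$ with $p(\mathcal O)=0$, $q(\mathcal O)=|\mathcal O|$. $f(p,q)$ is the number of orbits in $\mathcal N/\mathbb Z\cup\mathcal C/\mathbb Z$ with $(p(\mathcal O),q(\mathcal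 O))=(p,q)$; $[p,q]$ is the characteristic function of $\{(p,q)\}\subset\mathbb N^2$; sums pointwise. A relation $(\alpha,\beta)\in R$ is isolated if the path $(\alpha,\beta)$ lies in $\mathcal N$. Completing a set $R_0$ of isolated relations: add for each $\rho=(\alpha,\beta)\in R_0$ a new arrow $\gamma_\rho$ from $t\alpha$ to $s\beta$, and set $R'=R\cup\{(\gamma_\rho,\alpha),(\beta,\gamma_\rho)\mid\rho=(\alpha,\beta)\in R_0\}$, vertices unchanged. *)

From mathcomp Require Import all_boot.
Set Implicit Arguments. Unset Strict Implicit. Unset Printing Implicit Defensive.

(* Conventions: a quiver is (V, A, s, t) with finite types of vertices V and
   arrows A; R : {set A * A} is the set of relations, the pair (a,b) standing
   for the path (a,b) of length 2 (s a = t b).  Signs +1/-1 are encoded as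
   booleans (true = +1, negation = negb).
   A path (a_1,...,a_n) (s a_i = t a_(i+1)) is encoded as inr (a_1, [:: a_2;..;a_n]);
   a trivial path 1_{x,e} / 1'_{x,e} is encoded as inl (x, e). *)

Section Gentle.
Variables (V A : finType) (s t : A -> V) (R : {set A * A}).

Definition adjacent (x y : V) : bool :=
  [exists a : A, ((s a == x) && (t a == y)) || ((s a == y) && (t a == x))].

Definition gentle : Prop :=
  (0 < #|V| /\ (forall x y : V, connect adjacent x y)) /\
  (forall p, p \in R -> s p.1 = t p.2) /\
  (forall x : V, #|[set a : A | s a == x]| <= 2 /\ #|[set a : A | t a == x]| <= 2) /\
  (forall a : A, #|[set b : A | (s b == t a) && ((b, a) \notin R)]| <= 1 /\
                 #|[set c : A | (t c == s a) && ((a, c) \notin R)]| <= 1) /\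
  (forall a : A, #|[set b : A | (b, a) \in R]| <= 1 /\
                 #|[set c : A | (a, c) \in R]| <= 1) /\
  (exists n : nat, 0 < n /\
     forall (a : A) (r : seq A), (size r).+1 = n ->
       path (fun x y => s x == t y) a r ->
       ~~ path (fun x y => (s x == t y) && ((x, y) \notin R)) a r).

Variables (sg tau : A -> bool).

Definition sign_cond : Prop :=
  [/\ (forall a b : A, a != b -> s a = s b -> sg a != sg b),
      (forall a b : A, a != b -> t a = t b -> tau a != tau b) &
      (forall a b : A, s a = t b -> ((a, b) \in R) = (sg a == tau b))].

Definition word := ((V * bool) + (A * seq A))%type.

Definition arrows (w : word) : seq A :=
  match w with inl _ => [::] | inr (a, r) => a :: r end.
Definition wlen (w : word) : nat := size (arrows w).
Definition wt (w : word) : V := match w with inl (x, _) => x | inr (a, _) => t a end.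
Definition ws (w : word) : V :=
  match w with inl (x, _) => x | inr (a, r) => s (last a r) end.
Definition sgP (w : word) : bool :=
  match w with inl (_, e) => e | inr (a, r) => sg (last a r) end.
Definition tauP (w : word) : bool :=
  match w with inl (_, e) => ~~ e | inr (a, _) => tau a end.
Definition sgA (w : word) : bool :=
  match w with inl (_, e) => e | inr (a, r) => sg (last a r) end.
Definition tauA (w : word) : bool :=
  match w with inl (_, e) => e | inr (a, _) => tau a end.

Definition permitted (w : word) : bool :=
  match w with
  | inl _ => true
  | inr (a, r) => path (fun x y => (s x == t y) && ((x, y) \notin R)) a r
  end.
Definition antipath (w : word) : bool :=
  match w with
  | inl _ => true
  | inr (a, r) => path (fun x y => (s x == t y) && ((x, y) \in R)) a r
  end.

Definition max_permitted (w : word) : bool :=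
  [&& permitted w,
      [forall a : A, ~~ ((s a == wt w) && (sg a == ~~ tauP w))] &
      [forall b : A, ~~ ((t b == ws w) && (tau b == ~~ sgP w))]].
Definition max_antipath (w : word) : bool :=
  [&& antipath w,
      [forall a : A, ~~ ((s a == wt w) && (sg a == tauA w))] &
      [forall b : A, ~~ ((t b == ws w) && (tau b == sgA w))]].

Fixpoint seqs_upto (n : nat) : seq (seq A) :=
  match n with
  | 0 => [:: [::]]
  | n'.+1 => [::] :: [seq a :: r | a <- enum A, r <- seqs_upto n']
  end.

(* candidate words: all trivial ones and all arrow words of length <= #|A|.
   (Maximal permitted paths and maximal antipaths of a gentle quiver have
   pairwise distinct arrows, so this loses nothing.) *)
Definition cands : seq word :=
  [seq inl p | p <- enum [set: (V * bool)%type]] ++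
  [seq inr (a, r) | a <- enum A, r <- seqs_upto (#|A|).-1].

Definition Mset : seq word := [seq w <- cands | max_permitted w].
Definition Nset : seq word := [seq w <- cands | max_antipath w].

(* phi : M -> N and psi : N -> M (the unique element, picked from the list) *)
Definition phi (w : word) : word :=
  nth w [seq w' <- Nset | (wt w' == wt w) && (tauA w' == ~~ tauP w)] 0.
Definition psi (w : word) : word :=
  nth w [seq w' <- Mset | (ws w' == ws w) && (sgP w' == ~~ sgA w)] 0.
Definition Phi (w : word) : word := phi (psi w).

Definition orbN (w : word) : seq word :=
  [seq w' <- Nset | w' \in traject Phi w (size Nset)].
Definition orbitsN : seq (seq word) := undup [seq orbN w | w <- Nset].
Definition pN (O : seq word) : nat := size O.
Definition qN (O : seq word) : nat := sumn [seq wlen w | w <- O].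

Definition Cset : seq A :=
  [seq a <- enum A | ~~ has (fun w => a \in arrows w) Nset].
Definition Psi (a : A) : A :=
  nth a [seq b <- Cset | (t b == s a) && (tau b == sg a)] 0.
Definition orbC (a : A) : seq A := [seq b <- Cset | b \in traject Psi a (size Cset)].
Definition orbitsC : seq (seq A) := undup [seq orbC a | a <- Cset].
(* for O in C/Z : p(O) = 0, q(O) = |O| *)

Definition fcount (P Q : nat) : nat :=
  count (fun O => (pN O == P) && (qN O == Q)) orbitsN +
  count (fun O => (P == 0) && (size O == Q)) orbitsC.

Definition relword (r : A * A) : word := inr (r.1, [:: r.2]).
Definition isolated_set (R0 : {set A * A}) : Prop :=
  R0 \subset R /\ (forall r, r \in R0 -> relword r \in Nset).

(* m(O) = |R0 n O| for an orbit O of N/Z; for orbits of C/Z (sets of arrows)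
   the intersection with R0 (a set of length-2 paths) is empty, so m = 0 *)
Definition mN (R0 : {set A * A}) (O : seq word) : nat :=
  count (fun w => [exists r in R0, w == relword r]) O.

Definition rhs (R0 : {set A * A}) (P Q : nat) : nat :=
  (if (P == 0) && (Q == 3) then #|R0| else 0) +
  count (fun O => (pN O == P + mN R0 O) && (qN O == Q + 2 * mN R0 O)) orbitsN +
  count (fun O => (P + 0 == 0) && (size O == Q + 2 * 0)) orbitsC.

End Gentle.

Section Completion.
Variables (V A : finType) (s t : A -> V) (R R0 : {set A * A}).

Definition newarr := {r : A * A | r \in R0}.
Definition carr : finType := (A + newarr)%type.

Definition csrc (e : carr) : V :=
  match e with inl a => s a | inr r => t (val r).1 end.
Definition ctgt (e : carr) : V :=
  match e with inl a => t a | inr r => s (val r).2 end.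
Definition crel : {set carr * carr} :=
  [set p : carr * carr |
     match p with
     | (inl a, inl b) => (a, b) \in R
     | (inr r, inl a) => a == (val r).1
     | (inl b, inr r) => b == (val r).2
     | _ => false
     end].
End Completion.

Arguments csrc {V A} s t R0 e.
Arguments ctgt {V A} s t R0 e.

From mathcomp Require Import all_boot.
From mathcomp Require Import zify.
Set Implicit Arguments. Unset Strict Implicit. Unset Printing Implicit Defensive.

(* An arrow a joins its source port (s a, sg a) to its target
   port (t a, tau a).  The sign conditions make both port maps injective, and
   maximal antipaths (resp. maximal permitted paths) are exactly the walks
   between dead-end ports along which consecutive arrows meet at equal
   (resp. opposite) ports; hence they are determined by either end.

   In the completion the signs of old arrows change only by a flip at each
   vertex, so old walks stay walks.  The new arrow g of an isolated relation
   (a, b) closes the port cycle g, a, b: no maximal antipath uses g, a or b,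
   and g, a, b form a new Psi-orbit with (p, q) = (0, 3).  The maximal
   antipaths of the completion are the old ones minus the relation words
   (a, b), and the new Phi is the first return of the old one to them, since
   the permitted path after a relation word now continues through g.  So
   each Phi-orbit loses its m relation words, of length 2 each; no orbit
   consists of relation words only, as it would yield arbitrarily long
   permitted paths in the gentle completed quiver. *)

Lemma big_undup_partition (T S : eqType) (L : seq T) (h : T -> S) (F : T -> nat) :
  \sum_(x <- L) F x = \sum_(O <- undup (map h L)) \sum_(x <- L | h x == O) F x.
Proof.
rewrite (eq_bigr (fun O => \sum_(x <- L) (if h x == O then F x else 0)));
  last by move=> O _; rewrite big_mkcond.
rewrite exchange_big /=; apply: eq_big_seq => x xL.
have hxL : h x \in undup (map h L) by rewrite mem_undup map_f.
rewrite (bigD1_seq _ hxL (undup_uniq _)) /= eqxx big1 ?addn0 //.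
by move=> O /negbTE; rewrite eq_sym => ->.
Qed.

Lemma count_mem_card (T : finType) (p : pred T) (L : seq T) :
  uniq L -> count p L = #|[pred x | (x \in L) && p x]|.
Proof.
move=> L_uniq; rewrite -size_filter -(card_uniqP (filter_uniq p L_uniq)).
by apply: eq_card => x; rewrite !inE mem_filter andbC.
Qed.

Lemma card_sum_pred (T1 T2 : finType) (F : pred (T1 + T2)) :
  #|[pred x | F x]| = #|[pred a | F (inl a)]| + #|[pred b | F (inr b)]|.
Proof. by rewrite -!sum1_card big_sumType. Qed.

Lemma card_predU_disjoint (T : finType) (X Y : pred T) : (forall x, X x -> Y x -> False) ->
  #|[pred x | X x || Y x]| = #|[pred x | X x]| + #|[pred x | Y x]|.
Proof.
move=> XY; rewrite -!sum1_card (bigID X) /=; congr (_ + _); apply: eq_bigl => x /=.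
  by rewrite !inE; apply: andb_idl => ->.
rewrite !inE; case Xx: (X x); case Yx: (Y x) => //=.
by case: (XY x); rewrite ?Xx ?Yx.
Qed.

Lemma nth_filter_unique (T : eqType) (P : pred T) (s0 : seq T) x d :
  x \in s0 -> P x -> (forall y, y \in s0 -> P y -> y = x) -> nth d (filter P s0) 0 = x.
Proof.
move=> xs Px uniqx.
have : nth d (filter P s0) 0 \in filter P s0.
  by apply: mem_nth; rewrite size_filter -has_count; apply/hasP; exists x.
by rewrite mem_filter => /andP [P0 s0_0]; apply: uniqx.
Qed.

(** * Orbits of a permutation of a list *)

Section Orbits.
Variables (T : eqType) (L : seq T) (f : T -> T).
Hypotheses (f_stable : forall x, x \in L -> f x \in L) (f_inj : {in L &, injective f}).

Lemma iter_mem n x : x \in L -> iter n f x \in L.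
Proof. by move=> xL; elim: n => //= n IHn; apply: f_stable. Qed.

Lemma iter_subn_fix i j x :
  x \in L -> i <= j -> iter i f x = iter j f x -> iter (j - i) f x = x.
Proof.
elim: i j => [|i IHi] [|j] //= xL; rewrite ?subn0 // ltnS => le_ij E.
by rewrite subSS; apply: IHi => //; apply: f_inj E; apply: iter_mem.
Qed.

(* Among the size L + 1 first iterates two coincide, by the pigeonhole principle. *)
Lemma exists_period x : x \in L -> exists2 p, 0 < p <= size L & iter p f x = x.
Proof.
move=> xL; set its := [seq iter i f x | i <- iota 0 (size L).+1].
have : ~~ uniq its.
  apply/negP=> its_uniq.
  have its_L : {subset its <= L} by move=> y /mapP [i _ ->]; apply: iter_mem.
  by have := uniq_leq_size its_uniq its_L; rewrite size_map size_iota ltnn.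
case/(uniqPn x) => i [j [lt_ij]]; rewrite size_map size_iota => lt_j.
have lt_i := ltn_trans lt_ij lt_j.
rewrite !(nth_map 0) ?size_iota // !nth_iota // !add0n => E.
by exists (j - i); [apply/andP; split; lia | apply: iter_subn_fix (ltnW lt_ij) E].
Qed.

Definition reach x y := exists n, iter n f x = y.

Lemma iter_mul_period p x k : iter p f x = x -> iter (k * p) f x = x.
Proof. by move=> E; elim: k => //= k IHk; rewrite mulSn iterD IHk E. Qed.

Lemma mem_traject_reach x y : x \in L -> (y \in traject f x (size L)) <-> reach x y.
Proof.
move=> xL; split; first by case/trajectP=> i _ ->; exists i.
case=> n <-; have [p /andP [p_gt0 le_pL] E] := exists_period xL.
apply/trajectP; exists (n %% p); first exact: leq_trans (ltn_pmod n p_gt0) le_pL.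
by rewrite {1}(divn_eq n p) addnC iterD iter_mul_period.
Qed.

Lemma reach_sym x y : x \in L -> reach x y -> reach y x.
Proof.
move=> xL [n <-]; have [p /andP [p_gt0 _] E] := exists_period xL.
exists (n * p - n); rewrite -iterD subnK ?iter_mul_period //.
by rewrite leq_pmulr.
Qed.

Lemma reach_trans x y z : reach x y -> reach y z -> reach x z.
Proof. by case=> n <- [m <-]; exists (m + n); rewrite iterD. Qed.

Lemma exists_preimage x : x \in L -> exists2 y, y \in L & f y = x.
Proof.
move=> xL; have [p /andP [p_gt0 _] E] := exists_period xL.
by exists (iter p.-1 f x); [apply: iter_mem | rewrite -iterS prednK].
Qed.

Definition orbit_of x := [seq y <- L | y \in traject f x (size L)].
Definition orbits_of := undup [seq orbit_of x | x <- L].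

Lemma mem_orbit_of x y : x \in L -> (y \in orbit_of x) <-> (y \in L /\ reach x y).
Proof.
move=> xL; rewrite mem_filter; split; first by case/andP=> /(mem_traject_reach y xL).
by case=> yL /(mem_traject_reach y xL) ->.
Qed.

Lemma orbit_of_self x : x \in L -> x \in orbit_of x.
Proof. by move=> xL; apply/mem_orbit_of => //; split=> //; exists 0. Qed.

Lemma orbit_of_eq x y : x \in L -> y \in orbit_of x -> orbit_of y = orbit_of x.
Proof.
move=> xL /(mem_orbit_of _ xL) [yL rxy]; apply: eq_in_filter => z zL.
apply/idP/idP => [/(mem_traject_reach z yL) ryz|/(mem_traject_reach z xL) rxz].
  by apply/(mem_traject_reach z xL); apply: reach_trans ryz.
by apply/(mem_traject_reach z yL); apply: reach_trans (reach_sym xL rxy) rxz.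
Qed.

Lemma orbits_ofP O : O \in orbits_of -> exists2 x, x \in L & O = orbit_of x.
Proof. by rewrite mem_undup => /mapP [x xL ->]; exists x. Qed.

Lemma orbits_of_size_gt0 O : O \in orbits_of -> 0 < size O.
Proof. by case/orbits_ofP=> x xL ->; case: (orbit_of x) (orbit_of_self xL). Qed.

Lemma filter_mem_orbit_of y : [seq x <- L | x \in orbit_of y] = orbit_of y.
Proof. by apply: eq_in_filter => x xL; rewrite mem_filter xL andbT. Qed.

(* Counting the points of L orbit by orbit: an orbit satisfying [pr] and
   containing [k] points satisfying [g] contributes [k]. *)
Lemma count_orbits_weighted (pr : pred (seq T)) (g : pred T) (k : nat) :
  (forall O, O \in orbits_of -> pr O -> count g O = k) ->
  count pr orbits_of * k = count (fun x => g x && pr (orbit_of x)) L.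
Proof.
move=> countk; rewrite -!sum1_count big_distrl /= [RHS]big_mkcond /=.
rewrite (big_undup_partition L orbit_of) [LHS]big_mkcond /=.
apply: eq_big_seq => O; rewrite mem_undup => /mapP [y yL ->].
rewrite big_seq_cond (eq_bigr (fun x => if g x && pr (orbit_of y) then 1 else 0)); last first.
  by move=> x /andP [_ /eqP ->].
rewrite (eq_bigl (fun x => x \in orbit_of y)) => [|x /=]; last first.
  case xL: (x \in L); last by rewrite mem_filter xL andbF.
  by apply/eqP/idP => [<-|/(orbit_of_eq yL)//]; apply: orbit_of_self.
rewrite -big_filter filter_mem_orbit_of.
case: (boolP (pr (orbit_of y))) => [pry|_]; last by rewrite big1 // => x _; rewrite andbF.
rewrite mul1n -(countk _ _ pry) ?mem_undup ?map_f // -sum1_count big_mkcond /=.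
by apply: eq_bigr => x _; rewrite andbT.
Qed.

Lemma count_orbits_size k :
  count (fun O => size O == k) orbits_of * k = count (fun x => size (orbit_of x) == k) L.
Proof.
by rewrite (count_orbits_weighted (g := predT)) => [|O _ /eqP <-]; rewrite ?count_predT.
Qed.

Lemma count_orbits_size0 : count (fun O => size O == 0) orbits_of = 0.
Proof.
apply/eqP; rewrite -leqn0 leqNgt -has_count; apply/hasPn => O.
by move/orbits_of_size_gt0; rewrite lt0n.
Qed.

End Orbits.

(* [f'] acts on the image of [emb] as the map of first return of [f] to the
   points not in [skip]; then the [f']-orbits are the images of the
   [f]-orbits with the skipped points removed. *)
Section FirstReturn.
Variables (T T' : eqType) (L : seq T) (f : T -> T) (L' : seq T') (f' : T' -> T').
Hypotheses (L_uniq : uniq L) (f_stable : forall x, x \in L -> f x \in L)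
  (f_inj : {in L &, injective f}).
Hypotheses (L'_uniq : uniq L') (f'_stable : forall x, x \in L' -> f' x \in L')
  (f'_inj : {in L' &, injective f'}).
Variables (emb : T -> T') (skip : pred T).
Hypothesis emb_mem : forall x, x \in L -> ~~ skip x -> emb x \in L'.
Hypothesis emb_inj : {in L &, injective emb}.
Hypothesis first_return : forall x, x \in L -> ~~ skip x -> exists k, [/\ 0 < k,
  f' (emb x) = emb (iter k f x), ~~ skip (iter k f x) &
  forall j, 0 < j < k -> skip (iter j f x)].

Lemma iter_first_return x n : x \in L -> ~~ skip x ->
  exists y, [/\ iter n f' (emb x) = emb y, y \in L, ~~ skip y & reach f x y].
Proof.
move=> xL sx; elim: n => [|n [y [E yL sy rxy]]]; first by exists x; split=> //; exists 0.
have [k [_ Ef' sk _]] := first_return yL sy.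
exists (iter k f y); split; [by rewrite iterS E Ef' | exact: iter_mem | by [] |].
by apply: reach_trans rxy _; exists k.
Qed.

Lemma reach_first_return n x : x \in L -> ~~ skip x -> ~~ skip (iter n f x) ->
  reach f' (emb x) (emb (iter n f x)).
Proof.
elim: n {-2}n (leqnn n) x => [|N IHN] [|n] le_nN x xL sx sn; try by exists 0.
have [k [k_gt0 Ef' sk skipped]] := first_return xL sx.
have le_kn : k <= n.+1.
  rewrite leqNgt; apply/negP => lt_nk.
  by move: sn; rewrite skipped // lt_nk.
move: sn; rewrite -(subnK le_kn) iterD => sn.
have [|m Em] := IHN (n.+1 - k) _ (iter k f x) (iter_mem f_stable k xL) sk sn; first lia.
by exists m.+1; rewrite iterSr Ef'.
Qed.

Lemma orbit_of_first_return x : x \in L -> ~~ skip x ->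
  perm_eq (orbit_of L' f' (emb x)) [seq emb y | y <- orbit_of L f x & ~~ skip y].
Proof.
move=> xL sx; have exL := emb_mem xL sx.
apply: uniq_perm; first exact: filter_uniq.
  rewrite map_inj_in_uniq; first by do 2!apply: filter_uniq.
  by move=> a b; rewrite !mem_filter => /and3P [_ _ aL] /and3P [_ _ bL]; apply: emb_inj.
move=> y'; apply/idP/idP.
  case/(mem_orbit_of f'_stable f'_inj _ exL) => _ [n <-].
  have [y [-> yL sy rxy]] := iter_first_return n xL sx.
  by apply: map_f; rewrite mem_filter sy; apply/(mem_orbit_of f_stable f_inj _ xL).
case/mapP => y; rewrite mem_filter => /andP [sy].
case/(mem_orbit_of f_stable f_inj _ xL) => yL [n En] ->.
apply/(mem_orbit_of f'_stable f'_inj _ exL); split; first exact: emb_mem.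
by rewrite -En; apply: reach_first_return; rewrite ?En.
Qed.

End FirstReturn.

(** * Deterministic walks between ports *)

Section Walks.
Variables (A P : finType) (J : P -> P).
Hypothesis JK : involutive J.

(* Arrows are edges between ports: [walk u v q l e] follows the arrows [l]
   starting at port [q], entering each arrow [c] at [u c] and leaving it at
   [J (v c)], and stops at port [e]. *)
Fixpoint walk (u v : A -> P) (q : P) (l : seq A) (e : P) : bool :=
  if l is c :: l' then (u c == q) && walk u v (J (v c)) l' e else q == e.

Definition dead_end (u : A -> P) (q : P) : bool := [forall c, u c != q].

Lemma dead_endP (u : A -> P) q : reflect (forall c, u c != q) (dead_end u q).
Proof. exact: forallP. Qed.

Lemma walk_cons u v q c l e :
  walk u v q (c :: l) e = (u c == q) && walk u v (J (v c)) l e.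
Proof. by []. Qed.

Lemma walk_cat u v q l1 m l2 e :
  walk u v q l1 m -> walk u v m l2 e -> walk u v q (l1 ++ l2) e.
Proof.
elim: l1 q => [|c l1 IHl] q /=; first by move/eqP->.
by case/andP=> -> W1 W2; rewrite (IHl _ W1 W2).
Qed.

Lemma walk_catP u v q l1 l2 e :
  walk u v q (l1 ++ l2) e -> exists m, walk u v q l1 m /\ walk u v m l2 e.
Proof.
elim: l1 q => [|c l1 IHl] q /=; first by move=> W; exists q.
by case/andP=> -> /IHl [m [W1 W2]]; exists m; rewrite W1.
Qed.

Lemma walk_rev u v q l e : walk u v q l e -> walk v u (J e) (rev l) (J q).
Proof.
elim: l q => [|c l IHl] q /=; first by move/eqP->.
case/andP=> /eqP <- /IHl W; rewrite rev_cons -cats1.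
by apply: (walk_cat W); rewrite /= JK !eqxx.
Qed.

Lemma walk_dead_end_unique u v (u_inj : injective u) q l1 e1 l2 e2 :
  walk u v q l1 e1 -> dead_end u e1 -> walk u v q l2 e2 -> dead_end u e2 ->
  l1 = l2 /\ e1 = e2.
Proof.
elim: l1 q l2 => [|c l1 IHl] q [|c' l2] /=.
- by move=> /eqP-> _ /eqP->.
- by move=> /eqP <- /dead_endP D /andP [/eqP Ec' _]; have := D c'; rewrite Ec' eqxx.
- by move=> /andP [/eqP Ec _] _ /eqP <- /dead_endP D; have := D c; rewrite Ec eqxx.
- move=> /andP [/eqP Ec W1] D1 /andP [/eqP Ec' W2] D2.
  have Ecc' : c = c' by apply: u_inj; rewrite Ec Ec'.
  subst c'; by have [-> ->] := IHl _ _ W1 D1 W2 D2.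
Qed.

(* If an arrow [c] were used twice, cutting out the loop between its two uses
   would give two walks of different lengths whose reversals both run from
   the same port into the dead end [J q]. *)
Lemma walk_uniq u v (u_inj : injective u) (v_inj : injective v) q l e :
  walk u v q l e -> dead_end v (J q) -> uniq l.
Proof.
move=> W D.
suff loopfree l0 : walk u v q (l0 ++ l) e -> uniq l by apply: (loopfree [::]).
elim: l {W} l0 => [|c l IHl] l0 //= W.
apply/andP; split; last by apply: (IHl (rcons l0 c)); rewrite cat_rcons.
apply/negP=> c_l; move: W; case/splitPr: c_l => l1 l2 W.
have W' : walk u v q (l0 ++ c :: l2) e.
  have [m [W0 /= /andP [/eqP Ecm Wc]]] := walk_catP W.
  apply: (walk_cat W0); rewrite /= Ecm eqxx /=.
  by have [m' [_ /= /andP [_ W2]]] := walk_catP Wc.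
have [E _] := walk_dead_end_unique v_inj (walk_rev W) D (walk_rev W') D.
move: (congr1 size E); rewrite !size_rev !size_cat /= size_cat /=; lia.
Qed.

Fixpoint greedy_walk (u v : A -> P) (n : nat) (q : P) : seq A * P :=
  if n is n'.+1 then
    if [pick c | u c == q] is Some c then
      let: (l, e) := greedy_walk u v n' (J (v c)) in (c :: l, e)
    else ([::], q)
  else ([::], q).

Lemma greedy_walkP u v n q : walk u v q (greedy_walk u v n q).1 (greedy_walk u v n q).2.
Proof.
elim: n q => [|n IHn] q /=; first exact: eqxx.
case: pickP => [c /eqP Ec|_] /=; last exact: eqxx.
by case E: (greedy_walk _ _ _ _) (IHn (J (v c))) => [l e] /= W; rewrite Ec eqxx.
Qed.

Lemma greedy_walk_stops u v n q :
  size (greedy_walk u v n q).1 = n \/ dead_end u (greedy_walk u v n q).2.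
Proof.
elim: n q => [|n IHn] q /=; first by left.
case: pickP => [c _|none] /=; last by right; apply/forallP=> c; rewrite none.
by case E: (greedy_walk _ _ _ _) (IHn (J (v c))) => [l e] /= [->|]; [left|right].
Qed.

Lemma exists_walk_to_dead_end u v (u_inj : injective u) (v_inj : injective v) q :
  dead_end v (J q) -> exists l e, walk u v q l e /\ dead_end u e.
Proof.
move=> D; have W := greedy_walkP u v #|A|.+1 q.
case: (greedy_walk_stops u v #|A|.+1 q) => [Esize|De]; first last.
  by exists (greedy_walk u v #|A|.+1 q).1, (greedy_walk u v #|A|.+1 q).2.
have := max_card (mem (greedy_walk u v #|A|.+1 q).1).
by rewrite (card_uniqP (walk_uniq u_inj v_inj W D)) Esize ltnn.
Qed.

End Walks.

(** * Maximal paths and antipaths as walks between ports *)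

Definition negp (V : finType) (p : V * bool) : V * bool := (p.1, ~~ p.2).
Definition flipif (V : finType) (b : bool) (p : V * bool) : V * bool :=
  if b then negp p else p.

Lemma negpK (V : finType) : involutive (@negp V).
Proof. by case=> x e; rewrite /negp /= negbK. Qed.

Lemma flipifK (V : finType) b : involutive (@flipif V b).
Proof. by case: b => p //=; apply: negpK. Qed.

Section Ports.
Variables (V A : finType) (s t : A -> V) (R : {set A * A}) (sg tau : A -> bool).
Hypothesis signs : sign_cond s t R sg tau.

Local Notation NN := (Nset s t R sg tau).
Local Notation MM := (Mset s t R sg tau).
Local Notation CC := (Cset s t R sg tau).

Definition sport (a : A) : V * bool := (s a, sg a).
Definition tport (a : A) : V * bool := (t a, tau a).

Lemma sport_inj : injective sport.
Proof.
move=> a b [Es Esg]; apply/eqP; apply: contraT => ab.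
by case: signs => sg_diff _ _; move: (sg_diff a b ab Es); rewrite Esg eqxx.
Qed.

Lemma tport_inj : injective tport.
Proof.
move=> a b [Et Etau]; apply/eqP; apply: contraT => ab.
by case: signs => _ tau_diff _; move: (tau_diff a b ab Et); rewrite Etau eqxx.
Qed.

(* For a trivial word both end ports are (x, e), up to the sign flip of the
   trivial permitted path. *)
Definition src (w : word V A) : V * bool := (ws s w, sgA sg w).
Definition tgt (b : bool) (w : word V A) : V * bool :=
  match w with inl p => flipif b p | inr (a, _) => tport a end.

(* In an antipath ([b = false]) consecutive arrows meet at equal ports, in a
   permitted path ([b = true]) at opposite ports; maximality says that both
   end ports are dead ends. *)
Definition maximal (b : bool) (w : word V A) : bool :=
  [&& walk (flipif b) tport sport (tgt b w) (arrows w) (flipif b (src w)),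
      dead_end tport (flipif b (src w)) & dead_end sport (flipif b (tgt b w))].

Lemma walk_path b a l e :
  walk (flipif b) tport sport (flipif b (sport a)) l e =
  path (fun x y => tport y == flipif b (sport x)) a l &&
    (e == flipif b (sport (last a l))).
Proof.
elim: l a => [|c l IHl] a /=; first by rewrite eq_sym.
by rewrite IHl andbA.
Qed.

Lemma rel_antipath x y :
  (s x == t y) && ((x, y) \in R) = (tport y == flipif false (sport x)).
Proof.
case: signs => _ _ rel_sign; rewrite /tport /sport /= xpair_eqE [t y == _]eq_sym.
by case E: (s x == t y) => //=; rewrite (rel_sign _ _ (eqP E)) eq_sym.
Qed.

Lemma rel_permitted x y :
  (s x == t y) && ((x, y) \notin R) = (tport y == flipif true (sport x)).
Proof.
case: signs => _ _ rel_sign; rewrite /tport /sport /negp /= xpair_eqE [t y == _]eq_sym.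
case E: (s x == t y) => //=; rewrite (rel_sign _ _ (eqP E)).
by case: (sg x); case: (tau y).
Qed.

Lemma dead_end_sportE (p : V * bool) :
  dead_end sport p = [forall a, ~~ ((s a == p.1) && (sg a == p.2))].
Proof. by apply: eq_forallb => a; rewrite /sport -xpair_eqE; case: p. Qed.

Lemma dead_end_tportE (p : V * bool) :
  dead_end tport p = [forall a, ~~ ((t a == p.1) && (tau a == p.2))].
Proof. by apply: eq_forallb => a; rewrite /tport -xpair_eqE; case: p. Qed.

Lemma max_antipathE w : max_antipath s t R sg tau w = maximal false w.
Proof.
rewrite /max_antipath /maximal dead_end_sportE dead_end_tportE.
case: w => [[x e]|[a l]]; rewrite /src /= ?eqxx /=; first by rewrite andbC.
move: (walk_path false a l (sport (last a l))); rewrite /= eqxx andbT => ->.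
by congr (_ && _); [apply: eq_path => x y; apply: rel_antipath | apply: andbC].
Qed.

Lemma max_permittedE w : max_permitted s t R sg tau w = maximal true w.
Proof.
rewrite /max_permitted /maximal dead_end_sportE dead_end_tportE.
case: w => [[x e]|[a l]]; rewrite /src /= ?eqxx /=.
  by rewrite andbC; congr (_ && _); apply: eq_forallb => c; rewrite negbK.
move: (walk_path true a l (negp (sport (last a l)))); rewrite /= eqxx andbT => ->.
by congr (_ && _); [apply: eq_path => x y; apply: rel_permitted | apply: andbC].
Qed.

Lemma mem_seqs_upto n r : (r \in seqs_upto A n) = (size r <= n).
Proof.
elim: n r => [|n IHn] [|a r] //=; rewrite in_cons /= ltnS -IHn.
apply/allpairsP/idP => [[[x y] [_ /= y_in [_ ->]]] //|r_in].
by exists (a, r); split=> //; rewrite mem_enum.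
Qed.

Lemma uniq_seqs_upto n : uniq (seqs_upto A n).
Proof.
elim: n => //= n IHn; apply/andP; split; first by apply/negP => /allpairsP [[x y] [_ _]].
apply: allpairs_uniq => //; first exact: enum_uniq.
by move=> [x y] [x' y'] _ _ /= [-> ->].
Qed.

Lemma mem_cands w : (w \in cands V A) = (wlen w <= #|A|).
Proof.
rewrite mem_cat; case: w => [p|[a l]] /=; first by rewrite map_f // mem_enum in_setT.
have A_gt0 : 0 < #|A| by apply/card_gt0P; exists a.
apply/orP/idP => [[/mapP [p _] //|/allpairsP [[x y] [_ /=]]]|le_lA].
  by rewrite mem_seqs_upto => y_le [-> ->]; rewrite -(prednK A_gt0) ltnS.
right; apply/allpairsP; exists (a, l); split=> //=; first by rewrite mem_enum.
by rewrite mem_seqs_upto -ltnS prednK.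
Qed.

Lemma uniq_cands : uniq (cands V A).
Proof.
rewrite cat_uniq; apply/and3P; split.
- by rewrite map_inj_uniq ?enum_uniq // => p q [].
- by apply/hasPn => w /allpairsP [[x y] [_ _ /= ->]]; apply/negP => /mapP [p _].
- apply: allpairs_uniq; [exact: enum_uniq | exact: uniq_seqs_upto |].
  by move=> [x y] [x' y'] _ _ /= [-> ->].
Qed.

Lemma maximal_uniq b w : maximal b w -> uniq (arrows w).
Proof. by case/and3P => W _ D; apply: (walk_uniq (flipifK b) tport_inj sport_inj W D). Qed.

(* Hence the candidate words [cands], of length at most #|A|, contain all
   maximal words. *)
Lemma maximal_wlen b w : maximal b w -> wlen w <= #|A|.
Proof. by move/maximal_uniq/card_uniqP; rewrite /wlen => <-; apply: max_card. Qed.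

Lemma mem_Nset w : (w \in NN) = maximal false w.
Proof.
rewrite mem_filter max_antipathE mem_cands.
by apply/andP/idP => [[]//|Mw]; rewrite (maximal_wlen Mw).
Qed.

Lemma mem_Mset w : (w \in MM) = maximal true w.
Proof.
rewrite mem_filter max_permittedE mem_cands.
by apply/andP/idP => [[]//|Mw]; rewrite (maximal_wlen Mw).
Qed.

Lemma uniq_Nset : uniq NN.
Proof. exact/filter_uniq/uniq_cands. Qed.

Lemma word_eq (w1 w2 : word V A) : arrows w1 = arrows w2 -> src w1 = src w2 -> w1 = w2.
Proof.
case: w1 w2 => [[x1 e1]|[a1 l1]] [[x2 e2]|[a2 l2]] //=; first by move=> _ [-> ->].
by case=> -> ->.
Qed.

Lemma tgt_unique b w1 w2 : maximal b w1 -> maximal b w2 -> tgt b w1 = tgt b w2 -> w1 = w2.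
Proof.
case/and3P => W1 D1 _ /and3P [W2 D2 _] E; rewrite E in W1.
have [El Ee] := walk_dead_end_unique tport_inj W1 D1 W2 D2.
by apply: word_eq El _; apply: (can_inj (flipifK b)).
Qed.

Lemma src_unique b w1 w2 : maximal b w1 -> maximal b w2 -> src w1 = src w2 -> w1 = w2.
Proof.
case/and3P => W1 _ D1 /and3P [W2 _ D2] E.
have := walk_rev (flipifK b) W1; have := walk_rev (flipifK b) W2.
rewrite E !flipifK => W2' W1'.
have [El _] := walk_dead_end_unique sport_inj W1' D1 W2' D2.
by apply: word_eq E; rewrite -(revK (arrows w1)) El revK.
Qed.

Lemma walk_word b q l e :
  walk (flipif b) tport sport q l e -> dead_end tport e -> dead_end sport (flipif b q) ->
  exists w, [/\ maximal b w, tgt b w = q, flipif b (src w) = e & arrows w = l].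
Proof.
case: l => [|a l] /=.
  move=> /eqP <- De Dq; exists (inl (flipif b q)).
  by rewrite /maximal /src /tgt /= -surjective_pairing !flipifK eqxx De Dq.
case/andP => /eqP Ea W De Dq; move: (W); rewrite walk_path => /andP [_ /eqP Ee].
exists (inr (a, l)); split=> //.
by rewrite /maximal /= Ea eqxx -[src _]/(sport (last a l)) -Ee W De Dq.
Qed.

Lemma exists_tgt b q : dead_end sport (flipif b q) -> exists w, maximal b w /\ tgt b w = q.
Proof.
move=> Dq; have [l [e [W De]]] := exists_walk_to_dead_end (flipifK b) tport_inj sport_inj Dq.
by have [w [Mw Ew _ _]] := walk_word W De Dq; exists w.
Qed.

Lemma exists_src b p : dead_end tport (flipif b p) -> exists w, maximal b w /\ src w = p.
Proof.
move=> Dp; have [l [e [W De]]] := exists_walk_to_dead_end (flipifK b) sport_inj tport_inj Dp.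
have De' : dead_end sport (flipif b (flipif b e)) by rewrite flipifK.
have [w [Mw _ Ew _]] := walk_word (walk_rev (flipifK b) W) Dp De'.
by exists w; split=> //; apply: (can_inj (flipifK b)).
Qed.

Lemma phi_cond w0 w : (wt t w0 == wt t w) && (tauA tau w0 == ~~ tauP tau w) =
  (tgt false w0 == negp (tgt true w)).
Proof. by case: w0 => [[]|[]]; case: w => [[]|[]]. Qed.

Lemma psi_cond w0 w : (ws s w0 == ws s w) && (sgP sg w0 == ~~ sgA sg w) =
  (src w0 == negp (src w)).
Proof. by case: w0 => [[]|[]]. Qed.

Lemma phi_spec w : w \in MM ->
  phi s t R sg tau w \in NN /\ tgt false (phi s t R sg tau w) = negp (tgt true w).
Proof.
rewrite mem_Mset => /and3P [_ _ Dw].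
have [w0 [Mw0 Ew0]] := exists_tgt (Dw : dead_end sport (flipif false (negp _))).
suff -> : phi s t R sg tau w = w0 by rewrite mem_Nset.
apply: nth_filter_unique; rewrite ?mem_Nset ?phi_cond ?Ew0 //.
by move=> y; rewrite mem_Nset phi_cond => My /eqP Ey; apply: (tgt_unique My Mw0); rewrite Ey Ew0.
Qed.

Lemma psi_spec w : w \in NN ->
  psi s t R sg tau w \in MM /\ src (psi s t R sg tau w) = negp (src w).
Proof.
rewrite mem_Nset => /and3P [_ Dw _].
have Dw' : dead_end tport (flipif true (negp (src w))) by rewrite /= negpK.
have [w0 [Mw0 Ew0]] := exists_src Dw'.
suff -> : psi s t R sg tau w = w0 by rewrite mem_Mset.
apply: nth_filter_unique; rewrite ?mem_Mset ?psi_cond ?Ew0 //.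
by move=> y; rewrite mem_Mset psi_cond => My /eqP Ey; apply: (src_unique My Mw0); rewrite Ey Ew0.
Qed.

Lemma Phi_mem w : w \in NN -> Phi s t R sg tau w \in NN.
Proof. by case/psi_spec => /phi_spec []. Qed.

(* Going backwards along the permitted path psi w leads from Phi w back to w. *)
Lemma walk_Phi w : w \in NN ->
  exists l, walk (flipif true) tport sport (negp (tgt false (Phi s t R sg tau w))) l (src w).
Proof.
move=> wN; have [mM Em] := psi_spec wN; have [_ Ep] := phi_spec mM.
exists (arrows (psi s t R sg tau w)); rewrite /Phi Ep negpK.
by move: mM; rewrite mem_Mset => /and3P [/= W _ _]; rewrite Em negpK in W.
Qed.

Lemma Nset_walk_src_unique b q l1 l2 w1 w2 : w1 \in NN -> w2 \in NN ->
  walk (flipif b) tport sport q l1 (src w1) -> walk (flipif b) tport sport q l2 (src w2) ->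
  w1 = w2.
Proof.
rewrite !mem_Nset => M1 M2 W1 W2.
have D1 : dead_end tport (src w1) by case/and3P: M1.
have D2 : dead_end tport (src w2) by case/and3P: M2.
have [_ Es] := walk_dead_end_unique tport_inj W1 D1 W2 D2.
exact: src_unique M1 M2 Es.
Qed.

Lemma Phi_inj : {in NN &, injective (Phi s t R sg tau)}.
Proof.
move=> w1 w2 N1 N2 E.
have [l1 W1] := walk_Phi N1; have [l2 W2] := walk_Phi N2; rewrite E in W1.
exact: Nset_walk_src_unique N1 N2 W1 W2.
Qed.

Lemma gentle_permitted_walk_bounded : gentle s t R ->
  exists n, forall q l e, walk (flipif true) tport sport q l e -> size l < n.
Proof.
case=> _ [_ [_ [_ [_ [n [n_gt0 no_long_path]]]]]].
exists n => q [|c l] e //; rewrite walk_cons => /andP [_].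
rewrite walk_path => /andP [P _]; rewrite ltnNge; apply/negP => le_n.
have Pperm : path (fun x y => (s x == t y) && ((x, y) \notin R)) c l.
  by apply: sub_path P => a b; rewrite rel_permitted.
have Pn := take_path n.-1 Pperm.
have size_n : (size (take n.-1 l)).+1 = n by rewrite size_takel ?prednK // -ltnS prednK.
have Pquiver : path (fun x y => s x == t y) c (take n.-1 l).
  by apply: sub_path Pn => a b /andP [].
by move: (no_long_path c _ size_n Pquiver); rewrite Pn.
Qed.

Lemma walk_through_arrow b w a : maximal b w -> a \in arrows w ->
  exists l1 l2, [/\ arrows w = l1 ++ a :: l2,
    walk (flipif b) tport sport (tgt b w) l1 (tport a) &
    walk (flipif b) tport sport (tport a) (a :: l2) (flipif b (src w))].
Proof.
case/and3P => W _ _ a_w; move: W; case/splitPr: a_w => l1 l2 W.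
have [m [W1 /= /andP [/eqP Ea W2]]] := walk_catP W.
by exists l1, l2; rewrite Ea /= W1 W2 eqxx.
Qed.

Lemma Nset_arrow_unique w1 w2 a : w1 \in NN -> w2 \in NN ->
  a \in arrows w1 -> a \in arrows w2 -> w1 = w2.
Proof.
move=> N1 N2 a_w1 a_w2; move: (N1) (N2); rewrite !mem_Nset => M1 M2.
have [l1 [l2 [_ _ W1]]] := walk_through_arrow M1 a_w1.
have [l3 [l4 [_ _ W2]]] := walk_through_arrow M2 a_w2.
exact: Nset_walk_src_unique N1 N2 W1 W2.
Qed.

Lemma mem_Cset a : (a \in CC) = ~~ has (fun w => a \in arrows w) NN.
Proof. by rewrite mem_filter mem_enum andbT. Qed.

Lemma uniq_Cset : uniq CC.
Proof. exact/filter_uniq/enum_uniq. Qed.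

(* An arrow ending at the source port of [a] could only lie on a maximal
   antipath followed by [a]. *)
Lemma Cset_tport_sport a b : a \in CC -> tport b = sport a -> b \in CC.
Proof.
rewrite !mem_Cset => /hasPn a_off Eb; apply/hasPn => w wN; apply/negP => b_w.
move: (wN); rewrite mem_Nset => Mw.
have [l1 [l2 [Ew W1 _]]] := walk_through_arrow Mw b_w.
move: Ew W1; case/lastP: l1 => [|l1 c] Ew.
  move=> /= /eqP Et; case/and3P: Mw => _ _ /dead_endP /(_ a).
  by rewrite /= Et Eb eqxx.
rewrite -cats1 => /walk_catP [m [_]]; rewrite walk_cons => /andP [_ /eqP Em].
have Eca : c = a by apply: sport_inj; rewrite -Eb -Em.
by have := a_off w wN; rewrite Ew Eca mem_cat mem_rcons mem_head.
Qed.

(* Otherwise the source port of [a] is a dead end, and the maximal antipath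
   starting there ends with [a]. *)
Lemma exists_tport_sport a : a \in CC -> exists b, tport b = sport a.
Proof.
rewrite mem_Cset => /hasPn a_off.
case: (pickP (fun b => tport b == sport a)) => [b /eqP Eb|none]; first by exists b.
have Da : dead_end tport (flipif false (sport a)) by apply/forallP => c; rewrite none.
have [w [Mw Ew]] := exists_src Da.
have wN : w \in NN by rewrite mem_Nset.
have := a_off w wN; case: w Mw Ew {wN} => [[x e]|[a0 l]] Mw Ew.
  by case/and3P: Mw => _ _ /dead_endP /(_ a); rewrite /= -Ew eqxx.
have -> : a = last a0 l by apply: sport_inj; rewrite -Ew.
by rewrite mem_last.
Qed.

Lemma Psi_spec a : a \in CC ->
  Psi s t R sg tau a \in CC /\ tport (Psi s t R sg tau a) = sport a.
Proof.
move=> aC; have [b Eb] := exists_tport_sport aC.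
suff -> : Psi s t R sg tau a = b by rewrite (Cset_tport_sport aC Eb).
have tportE c : (t c == s a) && (tau c == sg a) = (tport c == sport a).
  by rewrite xpair_eqE.
apply: nth_filter_unique; rewrite ?(Cset_tport_sport aC Eb) ?tportE ?Eb //.
by move=> c _; rewrite tportE -Eb => /eqP; apply: tport_inj.
Qed.

Lemma Psi_mem a : a \in CC -> Psi s t R sg tau a \in CC.
Proof. by case/Psi_spec. Qed.

Lemma Psi_inj : {in CC &, injective (Psi s t R sg tau)}.
Proof.
move=> a b aC bC E; have [_ Ea] := Psi_spec aC; have [_ Eb] := Psi_spec bC.
by apply: sport_inj; rewrite -Ea -Eb E.
Qed.

End Ports.

(** * Completing isolated relations *)

Section Completion.
Variables (V A : finType) (s t : A -> V) (R R0 : {set A * A}) (sg tau : A -> bool)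
  (sg' tau' : carr R0 -> bool).
Hypotheses (signs : sign_cond s t R sg tau) (R0_isolated : isolated_set s t R sg tau R0)
  (signs' : sign_cond (csrc s t R0) (ctgt s t R0) (crel R R0) sg' tau').

Local Notation s' := (csrc s t R0).
Local Notation t' := (ctgt s t R0).
Local Notation R' := (crel R R0).
Local Notation sport' := (sport s' sg').
Local Notation tport' := (tport t' tau').
Local Notation sport := (sport s sg).
Local Notation tport := (tport t tau).
Local Notation NN := (Nset s t R sg tau).
Local Notation PP := (Phi s t R sg tau).
Local Notation NN' := (Nset s' t' R' sg' tau').
Local Notation PP' := (Phi s' t' R' sg' tau').
Local Notation CC := (Cset s t R sg tau).
Local Notation PS := (Psi s t R sg tau).
Local Notation CC' := (Cset s' t' R' sg' tau').
Local Notation PS' := (Psi s' t' R' sg' tau').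

(* The sign conditions fix the signs of the arrows at a vertex up to a common
   swap, so on old arrows [sg'] and [tau'] differ from [sg] and [tau] by the
   sign [vtwist x] of the vertex. *)
Definition vtwist (x : V) : bool :=
  if [pick a | s a == x] is Some a then sg a (+) sg' (inl a)
  else if [pick b | t b == x] is Some b then tau b (+) tau' (inl b) else false.

Lemma sg'_inl a : sg' (inl a) = sg a (+) vtwist (s a).
Proof.
rewrite /vtwist; case: pickP => [a0 /eqP E|none]; last by have := none a; rewrite eqxx.
case: (eqVneq a0 a) => [->|ne]; first by case: (sg a); case: (sg' (inl a)).
case: signs => sg_diff _ _; case: signs' => sg'_diff _ _.
have ne' : (inl a0 : carr R0) != inl a by apply: contra ne => /eqP [->].
move: (sg_diff _ _ ne E) (sg'_diff _ _ ne' E).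
by case: (sg a); case: (sg a0); case: (sg' (inl a)); case: (sg' (inl a0)).
Qed.

Lemma tau'_inl b : tau' (inl b) = tau b (+) vtwist (t b).
Proof.
rewrite /vtwist; case: pickP => [a0 /eqP E|none].
  case: signs => _ _ rel_sign; case: signs' => _ _ rel_sign'.
  move: (rel_sign _ _ E) (rel_sign' (inl a0) (inl b) E); rewrite inE => ->.
  by case: (sg a0); case: (tau b); case: (sg' (inl a0)); case: (tau' (inl b)).
case: pickP => [b0 /eqP E|none']; last by have := none' b; rewrite eqxx.
case: (eqVneq b0 b) => [->|ne]; first by case: (tau b); case: (tau' (inl b)).
case: signs => _ tau_diff _; case: signs' => _ tau'_diff _.
have ne' : (inl b0 : carr R0) != inl b by apply: contra ne => /eqP [->].
move: (tau_diff _ _ ne E) (tau'_diff _ _ ne' E).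
by case: (tau b); case: (tau b0); case: (tau' (inl b)); case: (tau' (inl b0)).
Qed.

Definition twist (p : V * bool) : V * bool := (p.1, p.2 (+) vtwist p.1).

Lemma twistK : involutive twist.
Proof. by case=> x e; rewrite /twist /= -addbA addbb addbF. Qed.

Lemma twist_inj : injective twist.
Proof. exact: can_inj twistK. Qed.

Lemma twist_negp p : twist (negp p) = negp (twist p).
Proof. by case: p => x e; rewrite /twist /negp /=; case: e; case: (vtwist x). Qed.

Lemma twist_flipif b p : twist (flipif b p) = flipif b (twist p).
Proof. by case: b => //=; apply: twist_negp. Qed.

Lemma sport'_inl a : sport' (inl a) = twist (sport a).
Proof. by rewrite /twist /= -sg'_inl. Qed.

Lemma tport'_inl a : tport' (inl a) = twist (tport a).
Proof. by rewrite /twist /= -tau'_inl. Qed.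

Lemma crel_tport_sport (x y : carr R0) :
  s' x = t' y -> (x, y) \in R' -> tport' y = sport' x.
Proof. by move=> E xRy; have := rel_antipath signs' x y; rewrite E eqxx xRy => /esym /eqP. Qed.

Lemma sport'_inr (r : newarr R0) : sport' (inr r) = twist (tport (val r).1).
Proof. by rewrite -tport'_inl; apply/esym/crel_tport_sport; rewrite ?inE. Qed.

Lemma tport'_inr (r : newarr R0) : tport' (inr r) = twist (sport (val r).2).
Proof. by rewrite -sport'_inl; apply: crel_tport_sport; rewrite ?inE. Qed.

Lemma relword_Nset r : r \in R0 -> relword V r \in NN.
Proof. by case: R0_isolated => _; apply. Qed.

Lemma relword_maximal r : r \in R0 -> maximal s t sg tau false (relword V r).
Proof. by move=> rR; rewrite -(mem_Nset signs) relword_Nset. Qed.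

Lemma relword_tport_sport r : r \in R0 -> tport r.2 = sport r.1.
Proof. by move/relword_maximal => /and3P [/= /andP [_ /andP [/eqP -> _]] _ _]. Qed.

Lemma relword_src w r : w \in NN -> r \in R0 -> src s sg w = sport r.2 -> w = relword V r.
Proof.
rewrite mem_Nset // => Mw rR E.
by apply: (src_unique signs Mw (relword_maximal rR)); rewrite E.
Qed.

Lemma relword_tgt w r : w \in NN -> r \in R0 -> tgt t tau false w = tport r.1 -> w = relword V r.
Proof.
rewrite mem_Nset // => Mw rR E.
by apply: (tgt_unique signs Mw (relword_maximal rR)); rewrite E.
Qed.

Definition isrel (w : word V A) : bool := [exists r in R0, w == relword V r].

Lemma isrelP w : reflect (exists2 r, r \in R0 & w = relword V r) (isrel w).
Proof.
apply: (iffP existsP) => [[r /andP [rR /eqP ->]]|[r rR ->]]; first by exists r.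
by exists r; rewrite rR eqxx.
Qed.

Definition lift (w : word V A) : word V (carr R0) :=
  match w with inl p => inl (twist p) | inr (a, l) => inr (inl a, map inl l) end.

Lemma src_lift w : src s' sg' (lift w) = twist (src s sg w).
Proof.
case: w => [[x e]|[a l]] //.
change (sport' (last (inl a) (map inl l)) = twist (sport (last a l))).
by rewrite last_map sport'_inl.
Qed.

Lemma tgt_lift b w : tgt t' tau' b (lift w) = twist (tgt t tau b w).
Proof. by case: w => [p|[a l]] /=; [rewrite twist_flipif | rewrite tport'_inl]. Qed.

Lemma arrows_lift w : arrows (lift w) = map inl (arrows w).
Proof. by case: w => [p|[a l]]. Qed.

Lemma wlen_lift w : wlen (lift w) = wlen w.
Proof. by rewrite /wlen arrows_lift size_map. Qed.

Lemma lift_inj : injective lift.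
Proof.
case=> [p|[a l]] [p'|[a' l']] //= E.
  by move/(congr1 (fun w => if w is inl q then twist q else p)): E; rewrite /= !twistK => ->.
by case: E => -> /(inj_map inl_inj) ->.
Qed.

Lemma walk_lift b q l e :
  walk (flipif b) tport' sport' (twist q) (map inl l) (twist e) =
  walk (flipif b) tport sport q l e.
Proof.
elim: l q => [|c l IHl] q /=; first by rewrite (inj_eq twist_inj).
by rewrite tport'_inl (inj_eq twist_inj) sport'_inl -twist_flipif IHl.
Qed.

Lemma dead_end_tport'_twist e : dead_end tport' (twist e) =
  dead_end tport e && [forall r : newarr R0, sport (val r).2 != e].
Proof.
apply/forallP/andP => [D'|[/forallP D /forallP Dnew] [a|r]].
- split; apply/forallP.
    by move=> a; have := D' (inl a); rewrite tport'_inl (inj_eq twist_inj).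
  by move=> r; have := D' (inr r); rewrite tport'_inr (inj_eq twist_inj).
- by rewrite tport'_inl (inj_eq twist_inj).
- by rewrite tport'_inr (inj_eq twist_inj).
Qed.

Lemma dead_end_sport'_twist q : dead_end sport' (twist q) =
  dead_end sport q && [forall r : newarr R0, tport (val r).1 != q].
Proof.
apply/forallP/andP => [D'|[/forallP D /forallP Dnew] [a|r]].
- split; apply/forallP.
    by move=> a; have := D' (inl a); rewrite sport'_inl (inj_eq twist_inj).
  by move=> r; have := D' (inr r); rewrite sport'_inr (inj_eq twist_inj).
- by rewrite sport'_inl (inj_eq twist_inj).
- by rewrite sport'_inr (inj_eq twist_inj).
Qed.

Lemma maximal_lift b w : maximal s' t' sg' tau' b (lift w) =
  [&& maximal s t sg tau b w,
      [forall r : newarr R0, sport (val r).2 != flipif b (src s sg w)] &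
      [forall r : newarr R0, tport (val r).1 != flipif b (tgt t tau b w)]].
Proof.
rewrite /maximal src_lift tgt_lift arrows_lift -!twist_flipif walk_lift.
rewrite dead_end_tport'_twist dead_end_sport'_twist.
by case: (walk _ _ _ _ _ _); case: (dead_end _ _); case: (dead_end _ _);
  case: [forall r, _]; case: [forall r, _].
Qed.

Lemma lift_Nset w : w \in NN -> ~~ isrel w -> lift w \in NN'.
Proof.
move=> wN notrel; rewrite mem_Nset // maximal_lift -(mem_Nset signs) wN /=.
apply/andP; split; apply/forallP => r; apply: contra notrel => /eqP E;
  apply/isrelP; exists (val r); try exact: valP.
- by apply: relword_src wN (valP r) _; rewrite E.
- by apply: relword_tgt wN (valP r) _; rewrite E.
Qed.

(* The new arrow of a completed relation (a, b) closes a cycle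
   [inr r, a, b] of ports, so no walk through it reaches a dead end. *)
Lemma triangle1 (r : newarr R0) : sport' (inr r) = tport' (inl (val r).1).
Proof. by rewrite sport'_inr tport'_inl. Qed.

Lemma triangle2 (r : newarr R0) : sport' (inl (val r).1) = tport' (inl (val r).2).
Proof. by rewrite sport'_inl tport'_inl relword_tport_sport //; apply: valP. Qed.

Lemma triangle3 (r : newarr R0) : sport' (inl (val r).2) = tport' (inr r).
Proof. by rewrite sport'_inl tport'_inr. Qed.

Lemma new_arrow_no_dead_end (r : newarr R0) l e :
  walk (flipif false) tport' sport' (tport' (inr r)) l e -> ~~ dead_end tport' e.
Proof.
move=> W; apply/negP => D.
have W' : walk (flipif false) tport' sport' (tport' (inr r))
    [:: inr r, inl (val r).1, inl (val r).2 & l] e.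
  by rewrite !walk_cons /= triangle1 triangle2 triangle3 !eqxx.
have [/(congr1 size) /= /eqP E _] := walk_dead_end_unique (tport_inj signs') W D W' D.
by move: E; rewrite -addn3 -{1}(addn0 (size l)) eqn_add2l.
Qed.

Lemma Nset'_no_new_arrow w r : w \in NN' -> inr r \notin arrows w.
Proof.
rewrite mem_Nset // => Mw; apply/negP => r_w.
have [l1 [l2 [_ _ W]]] := walk_through_arrow Mw r_w.
by case/and3P: Mw => _ D _; move/negP: (new_arrow_no_dead_end W); apply.
Qed.

Definition old_arrow (c : carr R0) : A :=
  match c with inl a => a | inr r => (val r).1 end.

Lemma map_old_arrow (l : seq (carr R0)) :
  (forall r, inr r \notin l) -> map inl (map old_arrow l) = l.
Proof.
elim: l => //= c l IHl l_old; rewrite IHl => [|r]; last first.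
  by apply: contra (l_old r) => r_l; rewrite inE r_l orbT.
by case: c l_old => // r /(_ r); rewrite mem_head.
Qed.

Lemma Nset'_lift w' : w' \in NN' -> exists w, [/\ w \in NN, ~~ isrel w & w' = lift w].
Proof.
move=> w'N; have [w Ew] : exists w, w' = lift w.
  case: w' w'N => [p|[c l]] w'N; first by exists (inl (twist p)); rewrite /= twistK.
  have cl_old r : inr r \notin c :: l := Nset'_no_new_arrow r w'N.
  clear w'N; case: c cl_old => [a|r] cl_old; last by have := cl_old r; rewrite mem_head.
  by exists (inr (a, map old_arrow l)); rewrite /= map_old_arrow //.
exists w; move: w'N; rewrite Ew mem_Nset // maximal_lift => /and3P [Mw /forallP src_new _].
split=> //; first by rewrite mem_Nset.
by apply/negP => /isrelP [r rR Er]; have := src_new (exist _ r rR); rewrite /= Er eqxx.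
Qed.

Definition back_port (w : word V A) : V * bool := twist (negp (tgt t tau false w)).

(* After the permitted path psi y, crossing the new arrow of the completed
   relation y = (a, b) continues the walk in the completed quiver. *)
Lemma walk_across_relword y : y \in NN -> isrel y ->
  exists2 l, 0 < size l & walk (flipif true) tport' sport' (back_port (PP y)) l (back_port y).
Proof.
move=> yN /isrelP [r rR Ey]; have [l W] := walk_Phi signs yN.
exists (map inl l ++ [:: inr (exist _ r rR)]); first by rewrite size_cat addn1.
apply: (walk_cat (m := twist (src s sg y))); first by rewrite /back_port walk_lift.
by rewrite walk_cons tport'_inr Ey /= eqxx sport'_inr /back_port twist_negp /= eqxx.
Qed.

Lemma walk_across_relwords x k : x \in NN -> 0 < k ->
  (forall j, 0 < j < k -> isrel (iter j PP x)) ->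
  exists l, walk (flipif true) tport' sport' (back_port (iter k PP x)) l (twist (src s sg x)).
Proof.
move=> xN; elim: k => // k IHk _ rel_between.
case: k IHk rel_between => [|k] IHk rel_between.
  by have [l W] := walk_Phi signs xN; exists (map inl l); rewrite /back_port walk_lift.
have [|l1 W1] := IHk isT => [j /andP [j_gt0 lt_jk]|].
  by apply: rel_between; rewrite j_gt0 ltnS ltnW.
have yN : iter k.+1 PP x \in NN by apply: (iter_mem (Phi_mem signs)).
have [l2 _ W2] := walk_across_relword yN (rel_between k.+1 (ltnSn _)).
by exists (l2 ++ l1); apply: walk_cat W2 W1.
Qed.

Lemma Phi'_lift x k : x \in NN -> ~~ isrel x -> 0 < k ->
  (forall j, 0 < j < k -> isrel (iter j PP x)) -> ~~ isrel (iter k PP x) ->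
  PP' (lift x) = lift (iter k PP x).
Proof.
move=> xN x_notrel k_gt0 rel_between k_notrel.
have xkN : iter k PP x \in NN by apply: (iter_mem (Phi_mem signs)).
have [w wN Ew] := exists_preimage (Phi_mem signs') (Phi_inj signs') (lift_Nset xkN k_notrel).
have [l W] := walk_Phi signs' wN; rewrite Ew tgt_lift -twist_negp in W.
have [l' W'] := walk_across_relwords xN k_gt0 rel_between; rewrite -src_lift in W'.
by rewrite -Ew (Nset_walk_src_unique signs' (lift_Nset xN x_notrel) wN W' W).
Qed.

Lemma Phi'_first_return x : x \in NN -> ~~ isrel x -> exists k, [/\ 0 < k,
  PP' (lift x) = lift (iter k PP x), ~~ isrel (iter k PP x) &
  forall j, 0 < j < k -> isrel (iter j PP x)].
Proof.
move=> xN x_notrel; have [p /andP [p_gt0 _] Ep] := exists_period (Phi_mem signs) (Phi_inj signs) xN.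
have : exists k, (0 < k) && ~~ isrel (iter k PP x) by exists p; rewrite p_gt0 Ep x_notrel.
case/ex_minnP => k /andP [k_gt0 k_notrel] k_min.
have rel_between j : 0 < j < k -> isrel (iter j PP x).
  case/andP => j_gt0 lt_jk; apply: contraT => j_notrel.
  by have := k_min j; rewrite j_gt0 j_notrel leqNgt lt_jk => /(_ isT).
by exists k; split=> //; apply: Phi'_lift.
Qed.

(* A Phi-orbit of relation words would give arbitrarily long permitted walks
   in the completed quiver, which is gentle. *)
Lemma no_orbit_of_relwords x : gentle s' t' R' -> x \in NN ->
  ~ (forall j, isrel (iter j PP x)).
Proof.
move=> gentle' xN all_rel.
have long_walk n : exists2 l, n <= size l &
    walk (flipif true) tport' sport' (back_port (iter n PP x)) l (back_port x).
  elim: n => [|n [l le_nl W]]; first by exists [::]; rewrite //= eqxx.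
  have xnN : iter n PP x \in NN by apply: (iter_mem (Phi_mem signs)).
  have [l' l'_gt0 W'] := walk_across_relword xnN (all_rel n).
  exists (l' ++ l); last exact: walk_cat W' W.
  by rewrite size_cat -add1n leq_add.
have [n bounded] := gentle_permitted_walk_bounded signs' gentle'.
have [l le_nl W] := long_walk n.
by have := bounded _ _ _ W; rewrite ltnNge le_nl.
Qed.

Definition on_rel (a : A) : bool := [exists r : newarr R0, a \in arrows (relword V (val r))].

Lemma Cset_not_on_rel a : a \in CC -> ~~ on_rel a.
Proof.
rewrite mem_Cset => /hasPn a_off; apply/existsP => -[r a_r].
by move: (a_off _ (relword_Nset (valP r))); rewrite a_r.
Qed.

Lemma mem_Cset'_inl a : (inl a \in CC') = (a \in CC) || on_rel a.
Proof.
apply/idP/idP => [|/orP [aC | /existsP [r a_r]]].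
- rewrite mem_Cset => /hasPn a_off'; apply: contraT; rewrite negb_or => /andP [].
  rewrite mem_Cset negbK => /hasP [w wN a_w] a_norel.
  have w_notrel : ~~ isrel w.
    apply: contra a_norel => /isrelP [r rR Ew].
    by apply/existsP; exists (exist _ r rR); rewrite -Ew.
  by have := a_off' _ (lift_Nset wN w_notrel); rewrite arrows_lift (mem_map inl_inj) a_w.
- move: aC; rewrite !mem_Cset => /hasPn a_off; apply/hasPn => w' w'N.
  have [w [wN _ ->]] := Nset'_lift w'N.
  by rewrite arrows_lift (mem_map inl_inj); apply: a_off.
- rewrite mem_Cset; apply/hasPn => w' w'N; have [w [wN w_notrel ->]] := Nset'_lift w'N.
  rewrite arrows_lift (mem_map inl_inj); apply: contra w_notrel => a_w; apply/isrelP.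
  exists (val r); first exact: valP.
  exact: (Nset_arrow_unique signs wN (relword_Nset (valP r)) a_w a_r).
Qed.

Lemma Cset'_new (r : newarr R0) : inr r \in CC'.
Proof. by rewrite mem_Cset; apply/hasPn => w' w'N; apply: Nset'_no_new_arrow. Qed.

Definition triangle (r : newarr R0) : seq (carr R0) := [:: inl (val r).1; inl (val r).2; inr r].

Lemma triangle_sub_Cset' r : {subset triangle r <= CC'}.
Proof.
have on_r i : on_rel (if i then (val r).1 else (val r).2).
  by apply/existsP; exists r; case: i; rewrite !inE eqxx ?orbT.
by move=> x; rewrite !inE => /or3P [] /eqP ->;
  rewrite ?Cset'_new // mem_Cset'_inl ?(on_r true) ?(on_r false) orbT.
Qed.

Lemma Psi'_eq x y : x \in CC' -> tport' y = sport' x -> PS' x = y.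
Proof.
by move=> xC E; have [_ E'] := Psi_spec signs' xC; apply: (tport_inj signs'); rewrite E' E.
Qed.

Lemma Psi'_inl a : a \in CC -> PS' (inl a) = inl (PS a).
Proof.
move=> aC; apply: Psi'_eq; first by rewrite mem_Cset'_inl aC.
by have [_ E] := Psi_spec signs aC; rewrite tport'_inl E sport'_inl.
Qed.

Lemma Psi'_rel1 (r : newarr R0) : PS' (inl (val r).1) = inl (val r).2.
Proof.
by apply: Psi'_eq; [apply: (@triangle_sub_Cset' r); rewrite !inE eqxx | rewrite triangle2].
Qed.

Lemma Psi'_rel2 (r : newarr R0) : PS' (inl (val r).2) = inr r.
Proof.
by apply: Psi'_eq; [apply: (@triangle_sub_Cset' r); rewrite !inE eqxx orbT | rewrite triangle3].
Qed.

Lemma Psi'_new (r : newarr R0) : PS' (inr r) = inl (val r).1.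
Proof. by apply: Psi'_eq; [apply: Cset'_new | rewrite triangle1]. Qed.

Lemma size_orbit_Psi'_inl a : a \in CC ->
  size (orbit_of CC' PS' (inl a)) = size (orbit_of CC PS a).
Proof.
move=> aC.
have Psi'_return b : b \in CC -> ~~ pred0 b -> exists k, [/\ 0 < k,
    PS' (inl b) = inl (iter k PS b), ~~ pred0 (iter k PS b) &
    forall j, 0 < j < k -> pred0 (iter j PS b)].
  by move=> bC _; exists 1; split=> // [|j /andP [j_gt0]]; [apply: Psi'_inl | rewrite ltnNge j_gt0].
have CC'_inl b : b \in CC -> ~~ pred0 b -> inl b \in CC' by move=> bC _; rewrite mem_Cset'_inl bC.
have := orbit_of_first_return (uniq_Cset s t R sg tau) (Psi_mem signs) (Psi_inj signs)
  (uniq_Cset s' t' R' sg' tau') (Psi_mem signs') (Psi_inj signs') CC'_inl (in2W inl_inj)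
  Psi'_return aC isT.
by move/perm_size ->; rewrite size_map filter_predT.
Qed.

Lemma triangle_uniq r : uniq (triangle r).
Proof.
have := maximal_uniq signs (relword_maximal (valP r)); rewrite /= !inE andbT.
by rewrite (inj_eq inl_inj) orbF andbT.
Qed.

Lemma size_orbit_Psi'_triangle r x : x \in triangle r -> size (orbit_of CC' PS' x) = 3.
Proof.
move=> x_r; have xC := triangle_sub_Cset' x_r.
have to_rel1 : reach PS' x (inl (val r).1).
  move: x_r; rewrite !inE => /or3P [] /eqP ->; first by exists 0.
    by exists 2; rewrite /= Psi'_rel2 Psi'_new.
  by exists 1; rewrite /= Psi'_new.
have reach_triangle y : y \in triangle r -> reach PS' x y.
  rewrite !inE => /or3P [] /eqP ->; apply: reach_trans to_rel1 _.
  - by exists 0.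
  - by exists 1; rewrite /= Psi'_rel1.
  - by exists 2; rewrite /= Psi'_rel1 Psi'_rel2.
have triangle_stable y : y \in triangle r -> PS' y \in triangle r.
  by rewrite !inE => /or3P [] /eqP ->; rewrite ?Psi'_rel1 ?Psi'_rel2 ?Psi'_new eqxx ?orbT.
suff /perm_size -> : perm_eq (orbit_of CC' PS' x) (triangle r) by [].
apply: uniq_perm; [exact/filter_uniq/uniq_Cset | exact: triangle_uniq |] => y.
apply/idP/idP => [|y_r].
  case/(mem_orbit_of (Psi_mem signs') (Psi_inj signs') _ xC) => _ [n <-].
  by elim: n => //= n; apply: triangle_stable.
apply/(mem_orbit_of (Psi_mem signs') (Psi_inj signs') _ xC).
by split; [apply: (triangle_sub_Cset' y_r) | apply: reach_triangle].
Qed.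

Lemma relword_arrows_neq r : r \in R0 -> r.1 != r.2.
Proof. by move/relword_maximal/(maximal_uniq signs); rewrite /= inE andbT. Qed.

Lemma on_rel_triangle a : on_rel a -> exists r, inl a \in triangle r.
Proof.
case/existsP => r; rewrite !inE => a_r; exists r.
by rewrite /triangle !inE orbF.
Qed.

Definition rel_arrow (x : newarr R0 + newarr R0) : A :=
  match x with inl r => (val r).1 | inr r => (val r).2 end.

Definition rel_of (x : newarr R0 + newarr R0) : newarr R0 :=
  match x with inl r | inr r => r end.

Lemma rel_arrow_mem x : rel_arrow x \in arrows (relword V (val (rel_of x))).
Proof. by case: x => r; rewrite !inE eqxx ?orbT. Qed.

Lemma relword_inj : injective (relword V (A := A)).
Proof. by move=> [a b] [a' b'] [-> ->]. Qed.

(* Distinct isolated relations are distinct maximal antipaths, hence share no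
   arrow. *)
Lemma rel_arrow_inj : injective rel_arrow.
Proof.
move=> x y E.
have relN z : relword V (val (rel_of z)) \in NN by apply/relword_Nset/valP.
have y_x : rel_arrow y \in arrows (relword V (val (rel_of x))) by rewrite -E rel_arrow_mem.
have /val_inj Erel : val (rel_of x) = val (rel_of y).
  exact/relword_inj/(Nset_arrow_unique signs (relN x) (relN y) y_x (rel_arrow_mem y)).
case: x y E Erel {y_x} => r [] r' /= E Er; subst r' => //.
all: by have := relword_arrows_neq (valP r); rewrite E eqxx.
Qed.

Lemma card_on_rel : #|[pred a | on_rel a]| = 2 * #|R0|.
Proof.
have -> : #|[pred a | on_rel a]| = #|[set rel_arrow x | x in [set: newarr R0 + newarr R0]]|.
  apply: eq_card => a; rewrite inE; apply/existsP/imsetP.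
    by case=> r; rewrite !inE => /orP [] /eqP ->; [exists (inl r) | exists (inr r)].
  by case=> -[r|r] _ ->; exists r; rewrite !inE eqxx ?orbT.
by rewrite card_imset ?cardsT ?card_sum ?card_sig ?addnn ?mul2n //; apply: rel_arrow_inj.
Qed.

Lemma card_Cset'_inl Q :
  #|[pred a | (inl a \in CC') && (size (orbit_of CC' PS' (inl a)) == Q)]| =
  count (fun a => size (orbit_of CC PS a) == Q) CC + #|[pred a | on_rel a]| * (Q == 3).
Proof.
rewrite (eq_card (B := [pred a | ((a \in CC) && (size (orbit_of CC PS a) == Q))
                                  || (on_rel a && (Q == 3))])) => [|a].
  rewrite card_predU_disjoint => [|a /andP [aC _] /andP [a_rel _]]; last first.
    by move: (Cset_not_on_rel aC); rewrite a_rel.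
  rewrite (count_mem_card _ (uniq_Cset s t R sg tau)); congr (_ + _).
  case: (Q == 3); rewrite ?muln1 ?muln0.
    by apply: eq_card => a; rewrite !inE andbT.
  by apply: eq_card0 => a; rewrite !inE andbF.
rewrite !inE mem_Cset'_inl; case: (boolP (a \in CC)) => aC /=.
  by rewrite size_orbit_Psi'_inl // (negbTE (Cset_not_on_rel aC)) orbF.
case: (boolP (on_rel a)) => //= /on_rel_triangle [r a_r].
by rewrite (size_orbit_Psi'_triangle a_r) eq_sym.
Qed.

Lemma card_Cset'_inr Q :
  #|[pred r | (inr r \in CC') && (size (orbit_of CC' PS' (inr r)) == Q)]| = #|R0| * (Q == 3).
Proof.
rewrite (eq_card (B := [pred r : newarr R0 | Q == 3])) => [|r]; last first.
  have r_r : inr r \in triangle r by rewrite !inE eqxx !orbT.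
  by rewrite !inE Cset'_new (size_orbit_Psi'_triangle r_r) eq_sym.
have -> : #|R0| = #|{: newarr R0}| by rewrite card_sig; apply: eq_card.
by case: (Q == 3); rewrite ?muln1 ?muln0; [apply: eq_card | apply: eq_card0].
Qed.

Lemma count_Cset'_orbit_size Q :
  count (fun x => size (orbit_of CC' PS' x) == Q) CC' =
  count (fun a => size (orbit_of CC PS a) == Q) CC + 3 * #|R0| * (Q == 3).
Proof.
rewrite (count_mem_card _ (uniq_Cset s' t' R' sg' tau')) card_sum_pred.
rewrite card_Cset'_inl card_Cset'_inr card_on_rel.
by rewrite -addnA; congr (_ + _); lia.
Qed.

Lemma count_orbits_size_Psi' Q :
  count (fun O => size O == Q) (orbits_of CC' PS') =
  count (fun O => size O == Q) (orbits_of CC PS) + #|R0| * (Q == 3).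
Proof.
case: Q => [|Q].
  rewrite (count_orbits_size0 (Psi_mem signs) (Psi_inj signs)).
  by rewrite (count_orbits_size0 (Psi_mem signs') (Psi_inj signs')) muln0.
apply/eqP; rewrite -(eqn_pmul2r (ltn0Sn Q)) mulnDl; apply/eqP.
rewrite (count_orbits_size (Psi_mem signs) (Psi_inj signs)).
rewrite (count_orbits_size (Psi_mem signs') (Psi_inj signs')).
rewrite count_Cset'_orbit_size; congr (_ + _).
by case: (eqVneq Q.+1 3) => [-> | _]; rewrite /= ?muln0 ?muln1 // mulnC.
Qed.

Lemma qN_perm (O1 O2 : seq (word V (carr R0))) : perm_eq O1 O2 -> qN O1 = qN O2.
Proof. by move=> O12; apply/perm_sumn/perm_map. Qed.

Lemma qN_lift (O : seq (word V A)) : qN (map lift O) = qN O.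
Proof. by rewrite /qN -map_comp; congr sumn; apply: eq_map => w /=; rewrite wlen_lift. Qed.

Lemma qN_split (O : seq (word V A)) :
  qN O = qN (filter (predC isrel) O) + 2 * count isrel O.
Proof.
elim: O => //= w O IHO; move: IHO; rewrite /qN /wlen /= => IHO.
by case: (isrelP w) => [[r _ ->]|_] /=; rewrite IHO; lia.
Qed.

Lemma Nset'_perm : perm_eq NN' (map lift (filter (predC isrel) NN)).
Proof.
apply: uniq_perm; first exact: uniq_Nset.
  by rewrite map_inj_uniq; [exact/filter_uniq/uniq_Nset | exact: lift_inj].
move=> w'; apply/idP/idP.
  by case/Nset'_lift => w [wN w_notrel ->]; rewrite map_f // mem_filter /= w_notrel.
by case/mapP => w; rewrite mem_filter => /andP [w_notrel wN] ->; apply: lift_Nset.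
Qed.

Lemma orbit_Phi'_lift x : x \in NN -> ~~ isrel x ->
  perm_eq (orbit_of NN' PP' (lift x)) (map lift (filter (predC isrel) (orbit_of NN PP x))).
Proof.
exact: (orbit_of_first_return (uniq_Nset s t R sg tau) (Phi_mem signs) (Phi_inj signs)
  (uniq_Nset s' t' R' sg' tau') (Phi_mem signs') (Phi_inj signs') lift_Nset (in2W lift_inj)
  Phi'_first_return).
Qed.

(* Passing to the completion removes the m relation words from an orbit; each
   of them has length 2. *)
Lemma orbit_Phi'_lift_pq x : x \in NN -> ~~ isrel x ->
  pN (orbit_of NN' PP' (lift x)) + mN R0 (orbit_of NN PP x) = pN (orbit_of NN PP x) /\
  qN (orbit_of NN' PP' (lift x)) + 2 * mN R0 (orbit_of NN PP x) = qN (orbit_of NN PP x).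
Proof.
move=> xN x_notrel; have O'E := orbit_Phi'_lift xN x_notrel.
rewrite /pN (perm_size O'E) (qN_perm O'E) size_map qN_lift (qN_split (orbit_of NN PP x)).
by rewrite size_filter /mN -/isrel addnC count_predC.
Qed.

Lemma orbits_Phi_mN_lt O : gentle s' t' R' -> O \in orbits_of NN PP -> mN R0 O < pN O.
Proof.
move=> gentle' /orbits_ofP [x xN ->]; rewrite /mN /pN -/isrel ltn_neqAle count_size andbT.
rewrite -all_count; apply/negP => /allP all_rel.
apply: (no_orbit_of_relwords gentle' xN) => j; apply: all_rel.
apply/(mem_orbit_of (Phi_mem signs) (Phi_inj signs) _ xN).
by split; [apply: iter_mem (Phi_mem signs) _ _ xN | exists j].
Qed.

Lemma count_orbitsN' P Q : gentle s' t' R' ->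
  count (fun O => (pN O == P) && (qN O == Q)) (orbits_of NN' PP') =
  count (fun O => (pN O == P + mN R0 O) && (qN O == Q + 2 * mN R0 O)) (orbits_of NN PP).
Proof.
move=> gentle'; case: P => [|P].
  rewrite !(@eq_in_count _ _ pred0) ?count_pred0 // => O OO /=.
    rewrite add0n; apply/negP => /andP [/eqP E _].
    by have := orbits_Phi_mN_lt gentle' OO; rewrite E ltnn.
  have := orbits_of_size_gt0 (Phi_mem signs') (Phi_inj signs') OO.
  by rewrite /pN lt0n => /negbTE ->.
apply/eqP; rewrite -(eqn_pmul2r (ltn0Sn P)); apply/eqP.
rewrite (count_orbits_weighted (Phi_mem signs') (Phi_inj signs') (g := predT)); last first.
  by move=> O _ /andP [/eqP <- _]; rewrite count_predT.
rewrite (count_orbits_weighted (Phi_mem signs) (Phi_inj signs) (g := predC isrel)); last first.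
  move=> O _ /andP [/eqP E _]; move: E; rewrite /pN /mN -/isrel.
  by rewrite -(count_predC isrel O) addnC => /eqP; rewrite eqn_add2r => /eqP.
rewrite (permP Nset'_perm) count_map count_filter; apply: eq_in_count => x xN /=.
case: (boolP (isrel x)) => [_|x_notrel] /=; first by rewrite andbF.
have [<- <-] := orbit_Phi'_lift_pq xN x_notrel.
by rewrite !eqn_add2r andbT.
Qed.

Lemma count_orbitsC' P Q :
  count (fun O => (P == 0) && (size O == Q)) (orbits_of CC' PS') =
  (if (P == 0) && (Q == 3) then #|R0| else 0) +
  count (fun O => (P + 0 == 0) && (size O == Q + 2 * 0)) (orbits_of CC PS).
Proof.
case: P => [|P]; last by rewrite !(@eq_count _ _ pred0) ?count_pred0 // => O; rewrite addn0.
rewrite (eq_count (a2 := fun O => size O == Q)) // count_orbits_size_Psi' addnC.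
rewrite (eq_count (a1 := fun O => _ && _) (a2 := fun O => size O == Q)) => [|O]; last first.
  by rewrite muln0 !addn0.
by congr (_ + _); case: (Q == 3); rewrite ?muln1 ?muln0.
Qed.

End Completion.

Theorem corollary4p3 (V A : finType) (s t : A -> V) (R R0 : {set A * A})
    (sg tau : A -> bool) (sg' tau' : carr R0 -> bool) :
  gentle s t R -> sign_cond s t R sg tau ->
  isolated_set s t R sg tau R0 ->
  gentle (csrc s t R0) (ctgt s t R0) (crel R R0) ->
  sign_cond (csrc s t R0) (ctgt s t R0) (crel R R0) sg' tau' ->
  forall P Q : nat,
    fcount (csrc s t R0) (ctgt s t R0) (crel R R0) sg' tau' P Q
    = rhs s t R sg tau R0 P Q.
Proof.
move=> _ signs R0_isolated gentle' signs' P Q.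
rewrite /fcount /rhs.
rewrite (count_orbitsN' signs R0_isolated signs' P Q gentle').
rewrite (count_orbitsC' signs R0_isolated signs' P Q).
by rewrite addnCA addnA.
Qed.
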